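(* Let $n\ge2$ and $\Delta\subset B_n$ a proper ideal. For each facet $(A;x)$ of $\mathrm{Bier}(B_n,\Delta)$ define $\chi(A;x)\in\{-1,0,1\}^n$ by $\chi(A;x)_a=-1$ if $a\in A\cup\{x\}$ and $a\le x$; $\chi(A;x)_a=0$ if $a\notin A\cup\{x\}$; $\chi(A;x)_a=+1$ if $a\in A\cup\{x\}$ and $a>x$. Then ordering the facets so that $\chi$ increases in lexicographic order is a shelling order of $\mathrm{Bier}(B_n,\Delta)$.
   Context: $B_n$ is the Boolean lattice of subsets of $[1,n]=\{1,\dots,n\}$. A proper ideal $\Delta\subset B_n$ is a nonempty family of subsets of $[1,n]$ closed under taking subsets with $[1,n]\notin\Delta$. The Bier sphere $\mathrm{Bier}(B_n,\Delta)$ is the simplicial complex whose faces are the pairs $(B,C)$ with $B\subsetneq C\subseteq[1,n]$, $B\in\Delta$, $C\notin\Delta$, with $(B',C')$ a face of $(B,C)$ iff $B'\subseteq B$ and $C\subseteq C'$ (concretely $(B,C)$ is the vertex set $B\sqcup\{\bar d: d\notin C\}$ on $[1,n]\sqcup\{\bar1,\dots,\bar n\}$). Its facets are $(A;x):=(A,A\cup\{x\})$ with $A\in\Delta$, $x\notin A$, $A\cup\{x\}\notin\Delta$. Lexicographic order: $u<_{\mathrm{lex}}v$ if at the first coordinate where they differ, $u$ is smaller. A shelling order of a pure complex is an ordering $F_1,F_2,\dots$ of its facets such that for each $k\ge2$, $F_k\cap(F_1\cup\dots\cup F_{k-1})$ is pure of dimension $\dim F_k-1$. *)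

(* Ground set [1,n] is modelled by 'I_n (element i stands for i+1;
   the natural order is preserved). Vertices of the Bier sphere: 'I_n + 'I_n,
   with inl d = d and inr d = \bar d. *)
From mathcomp Require Import all_boot all_order all_algebra.
Set Implicit Arguments. Unset Strict Implicit. Unset Printing Implicit Defensive.
Import Order.TTheory GRing.Theory Num.Theory.

Section Bier.
Variable n : nat.

Definition Bn_proper_ideal (D : {set {set 'I_n}}) : Prop :=
  [/\ D != set0,
      (forall B C : {set 'I_n}, C \in D -> B \subset C -> B \in D)
    & [set: 'I_n] \notin D].

Definition face_vs (B C : {set 'I_n}) : {set 'I_n + 'I_n} :=
  (inl @: B) :|: (inr @: (~: C)).

Definition bier_faces (D : {set {set 'I_n}}) : {set {set 'I_n + 'I_n}} :=
  [set S | [exists B : {set 'I_n}, exists C : {set 'I_n},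
     [&& B \proper C, B \in D, C \notin D & S == face_vs B C]]].

Definition bier_facet (D : {set {set 'I_n}}) (F : {set 'I_n} * 'I_n) : bool :=
  [&& F.1 \in D, F.2 \notin F.1 & (F.2 |: F.1) \notin D].

Definition facet_vs (F : {set 'I_n} * 'I_n) : {set 'I_n + 'I_n} :=
  face_vs F.1 (F.2 |: F.1).

Definition chi (F : {set 'I_n} * 'I_n) : 'I_n -> int :=
  fun a => if a \in F.2 |: F.1 then (if (a <= F.2)%N then (-1)%R else 1%R) else 0%R.

Definition lex_lt (u v : 'I_n -> int) : Prop :=
  exists i : 'I_n, (forall j : 'I_n, (j < i)%N -> u j = v j) /\ (u i < v i)%R.
Definition lex_le (u v : 'I_n -> int) : Prop := (forall i, u i = v i) \/ lex_lt u v.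

Definition sdim {V : finType} (S : {set V}) : int := (#|S|%:Z - 1)%R.

Definition pure_of_dim {V : finType} (K : {set {set V}}) (d : int) : Prop :=
  (forall S, S \in K -> exists2 T, T \in K & S \subset T /\ sdim T = d) /\
  (forall T, T \in K -> (sdim T <= d)%R).

(* F_k ∩ (F_1 ∪ ... ∪ F_{k-1}) as a subcomplex, for a list of facets (0-indexed) *)
Definition inter_prev {V : finType} (s : seq {set V}) (k : nat) : {set {set V}} :=
  [set S : {set V} | (S \subset nth set0 s k) &&
           [exists i : 'I_k, S \subset nth set0 s i]].

Definition shelling_order {V : finType} (s : seq {set V}) : Prop :=
  forall k, (1 <= k < size s)%N ->
    pure_of_dim (inter_prev s k) (sdim (nth set0 s k) - 1)%R.

End Bier.

(* If G = (B;y) precedes F = (A;x), look at the first coordinate where chi G < chi F.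
   It yields a vertex v of F missing from G: an element a > x of A outside B,
   or a barred b < x with b in the support of G but not of F; if neither
   existed, x |: A would lie in B, which is in the ideal while x |: A is not.
   Removing v from F leaves a ridge contained in a facet H with chi H <lex chi F,
   obtained from F by adding, deleting or exchanging one element. Hence each facet
   meets the union of its predecessors in a pure complex of codimension one. *)

From mathcomp Require Import all_boot all_order all_algebra zify.
Import Order.TTheory GRing.Theory Num.Theory.

Section LexOrder.
Variable n : nat.
Implicit Types u v : 'I_n -> int.

Lemma lex_lt_le_asym u v : lex_lt u v -> lex_le v u -> False.
Proof.
case=> i [eq_i lt_i] [eq_vu | [j [eq_j lt_j]]].
  by move: lt_i; rewrite eq_vu ltxx.
case: (ltngtP i j) => [ij | ji | /val_inj ij].
- by move: lt_i; rewrite (eq_j i ij) ltxx.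
- by move: lt_j; rewrite (eq_i j ji) ltxx.
- by move: lt_i lt_j; rewrite ij => ? ?; lia.
Qed.

Lemma lex_lt_irr u : ~ lex_lt u u.
Proof. by move=> lt_uu; apply: lex_lt_le_asym lt_uu _; left. Qed.

Lemma lex_lt_pointwise u v :
  (forall c, u c <= v c)%R -> (exists c, u c < v c)%R -> lex_lt u v.
Proof.
move=> le_uv [c0 lt_c0].
have ex_lt : exists m, [exists c : 'I_n, (val c == m) && (u c < v c)%R].
  by exists (val c0); apply/existsP; exists c0; rewrite eqxx.
case: (ex_minnP ex_lt) => _ /existsP[c /andP[/eqP <- lt_c]] min_c.
exists c; split => // j jc; apply/eqP; rewrite eq_le le_uv /=.
rewrite leNgt; apply: contraTN jc => lt_j; rewrite -leqNgt min_c //.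
by apply/existsP; exists j; rewrite eqxx.
Qed.

End LexOrder.

Section FaceVertices.
Variable n : nat.
Implicit Types B C : {set 'I_n}.

Lemma mem_face_vs_inl B C c : (inl c \in face_vs B C) = (c \in B).
Proof.
rewrite inE (mem_imset _ _ (@inl_inj _ _)).
by case: (c \in B) => //=; apply/imsetP; case.
Qed.

Lemma mem_face_vs_inr B C c : (inr c \in face_vs B C) = (c \notin C).
Proof.
rewrite inE (mem_imset _ _ (@inr_inj _ _)) inE orbC.
by case: (c \in C) => //=; apply/imsetP; case.
Qed.

Definition mem_face_vs := (mem_face_vs_inl, mem_face_vs_inr).

Lemma face_vsD1l B C a : face_vs B C :\ inl a = face_vs (B :\ a) C.
Proof. by apply/setP => -[c|c]; rewrite in_setD1 !mem_face_vs ?inE. Qed.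

Lemma face_vsD1r B C b : face_vs B C :\ inr b = face_vs B (b |: C).
Proof. by apply/setP => -[c|c]; rewrite in_setD1 !mem_face_vs ?inE ?negb_or. Qed.

Lemma face_vs_subset B C B' C' :
  (face_vs B C \subset face_vs B' C') = (B \subset B') && (C' \subset C).
Proof.
apply/subsetP/andP => [sub | [/subsetP sBB' /subsetP sC'C] [c|c]].
  split; apply/subsetP => c.
    by have := sub (inl c); rewrite !mem_face_vs.
  by have := sub (inr c); rewrite !mem_face_vs; apply: contraTT.
  by rewrite !mem_face_vs; apply: sBB'.
by rewrite !mem_face_vs; apply: contra; apply: sC'C.
Qed.

End FaceVertices.

Section Chi.
Variable n : nat.
Implicit Types F G : {set 'I_n} * 'I_n.

Variant chi_spec F c : int -> Type :=
  | ChiOut of c \notin F.2 |: F.1 : chi_spec F c 0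
  | ChiLow of c \in F.2 |: F.1 & (c <= F.2)%N : chi_spec F c (-1)
  | ChiHigh of c \in F.2 |: F.1 & (F.2 < c)%N : chi_spec F c 1.

Lemma chiP F c : chi_spec F c (chi F c).
Proof.
rewrite /chi; case: ifPn => [cS|]; last exact: ChiOut.
by case: leqP => c_x; [apply: ChiLow | apply: ChiHigh].
Qed.

Lemma chi_low F c : c \in F.2 |: F.1 -> (c <= F.2)%N -> chi F c = (-1)%R.
Proof. by rewrite /chi => -> ->. Qed.

Lemma chi_pivot F : chi F F.2 = (-1)%R.
Proof. exact: chi_low (setU11 _ _) (leqnn _). Qed.

Lemma chi_eqN1 F c : chi F c = (-1)%R -> c \in F.2 |: F.1 /\ (c <= F.2)%N.
Proof. by case: chiP. Qed.

Lemma chi_inj F G : F.2 \notin F.1 -> G.2 \notin G.1 -> chi F =1 chi G -> F = G.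
Proof.
case: F G => [A x] [B y] /= xA yB eq_chi.
have eq_S : x |: A = y |: B.
  apply/setP => c; move: (eq_chi c).
  case: (chiP (A, x) c) => /= [/negPf->|-> _|-> _];
    by case: (chiP (B, y) c) => /= [/negPf->|-> _|-> _].
have /chi_eqN1[_ le_xy] : chi (B, y) x = (-1)%R by rewrite -eq_chi (chi_pivot (A, x)).
have /chi_eqN1[_ le_yx] : chi (A, x) y = (-1)%R by rewrite eq_chi (chi_pivot (B, y)).
have eq_xy : x = y by apply/val_inj/eqP; rewrite eqn_leq le_xy le_yx.
by rewrite -(setU1K xA) -(setU1K yB) eq_S eq_xy.
Qed.

End Chi.

Arguments chiP {n}.

Section BierSphere.
Variables (n : nat) (D : {set {set 'I_n}}).
Hypothesis D_ideal : Bn_proper_ideal D.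
Implicit Types (A B : {set 'I_n}) (x y : 'I_n).

Lemma ideal_subset {B C} : C \in D -> B \subset C -> B \in D.
Proof. by case: D_ideal => _ + _; apply. Qed.

Lemma lex_lt_facet_ridge_inl {A x a} :
  bier_facet D (A, x) -> a \in A -> (x < a)%N ->
  exists H, [/\ bier_facet D H, lex_lt (chi H) (chi (A, x))
              & facet_vs (A, x) :\ inl a \subset facet_vs H].
Proof.
move=> /and3P[/= AD xA SD] aA xa.
have ax : a != x by apply/eqP => ax; move: xa; rewrite ax ltnn.
rewrite /facet_vs face_vsD1l /=.
have [SaD | SaD] := boolP (x |: (A :\ a) \in D).
- have eq_S : a |: (x |: (A :\ a)) = x |: A by rewrite setUCA setD1K.
  exists (x |: (A :\ a), a); split.
  + by rewrite /bier_facet /= eq_S SaD SD !inE eqxx (negPf ax).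
  + apply: lex_lt_pointwise => [c|]; last first.
      by exists a; rewrite /chi /= eq_S !inE aA orbT leqnn leqNgt xa.
    rewrite /chi /= eq_S; case: ifP => // _.
    by case: leqP => [_ | ac]; [case: ifP | rewrite leqNgt (ltn_trans xa ac)].
  + by rewrite face_vs_subset /= eq_S subsetUr subxx.
- exists (A :\ a, x); split.
  + by rewrite /bier_facet /= SaD (ideal_subset AD (subD1set A a)) !inE negb_and xA orbT.
  + apply: lex_lt_pointwise => [c|]; last first.
      by exists a; rewrite /chi /= !inE eqxx (negPf ax) aA /= leqNgt xa.
    rewrite /chi /= !inE; case: (c =P a) => [-> | _] /=; last by [].
    by rewrite (negPf ax) aA leqNgt xa.
  + by rewrite face_vs_subset subxx setUS ?subD1set.
Qed.

Lemma lex_lt_facet_ridge_inr {A x b} :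
  bier_facet D (A, x) -> b \notin x |: A -> (b < x)%N ->
  exists H, [/\ bier_facet D H, lex_lt (chi H) (chi (A, x))
              & facet_vs (A, x) :\ inr b \subset facet_vs H].
Proof.
move=> /and3P[/= AD xA SD] bS bx.
have [bx' bA] : b != x /\ b \notin A by move: bS; rewrite !inE negb_or => /andP[].
rewrite /facet_vs face_vsD1r /=.
have [bAD | bAD] := boolP (b |: A \in D).
- exists (b |: A, x); split.
  + rewrite /bier_facet /= bAD !inE eq_sym (negPf bx') (negPf xA) /=.
    by apply: contra SD => /ideal_subset; apply; rewrite setUCA subsetUr.
  + apply: lex_lt_pointwise => [c|]; last first.
      by exists b; rewrite /chi /= !inE eqxx orbT (negPf bx') (negPf bA) (ltnW bx).
    rewrite /chi /= !inE; case: (c =P b) => [-> | _] /=; last by [].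
    by rewrite (negPf bx') (negPf bA) (ltnW bx).
  + by rewrite face_vs_subset /= subsetUr setUCA subxx.
- exists (A, b); split.
  + by rewrite /bier_facet /= AD bA.
  + exists b; split; last by rewrite /chi /= !inE eqxx (negPf bx') (negPf bA) leqnn.
    move=> c cb; have cx := ltn_trans cb bx.
    by rewrite /chi /= !inE -!val_eqE /= !ltn_eqF // (ltnW cb) (ltnW cx).
  + by rewrite face_vs_subset subxx setUS ?subsetUr.
Qed.

Lemma lex_lt_facet_witness {A x B y} :
  bier_facet D (A, x) -> bier_facet D (B, y) -> lex_lt (chi (B, y)) (chi (A, x)) ->
  (exists2 a, a \in A :\: B & (x < a)%N) \/
  (exists2 b, b \in (y |: B) :\: (x |: A) & (b < x)%N).
Proof.
move=> /and3P[/= AD xA SD] /and3P[/= BD _ _] [i [eq_below lt_i]].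
case: (pickP [pred a | (a \in A :\: B) && (x < a)%N]) => [a /andP[]|noA].
  by left; exists a.
case: (pickP [pred b | (b \in (y |: B) :\: (x |: A)) && (b < x)%N]) => [b /andP[]|noB].
  by right; exists b.
(* Otherwise the first difference forces x < y, and then x |: A \subset B. *)
exfalso; apply: (negP SD); apply: (ideal_subset BD).
have [xi iy] : (x < i)%N /\ (i <= y)%N.
  move: lt_i (noA i) (noB i) => /=.
  case: (chiP (A, x) i) => /= [iS | // | iS xi];
    case: (chiP (B, y) i) => /= [iT | iT iy | //] //.
  - move=> _ _; rewrite inE iT iS /= => /negbT; rewrite -leqNgt => le_xi.
    split=> //; rewrite ltn_neqAle le_xi andbT; apply: contraNneq iS => /val_inj <-.
    exact: setU11.
  - have iA : i \in A by move: iS => /setU1P[ix | //]; rewrite ix ltnn in xi.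
    by move: iT; rewrite !inE negb_or iA xi => /andP[_ ->].
apply/subsetP => c cS; case: (ltnP x c) => [xc | cx].
  have cA : c \in A by move: cS => /setU1P[cx | //]; rewrite cx ltnn in xc.
  by have := noA c; rewrite /= !inE cA xc !andbT => /negbFE.
have /chi_eqN1[/= cT cy] : chi (B, y) c = (-1)%R.
  by rewrite eq_below ?(leq_ltn_trans cx xi) // chi_low.
move: cT => /setU1P[cy' | //].
by have := leq_ltn_trans cx (leq_trans xi iy); rewrite cy' ltnn.
Qed.

Lemma lex_lt_facet_ridge {F G} :
  bier_facet D F -> bier_facet D G -> lex_lt (chi G) (chi F) ->
  exists2 v, v \in facet_vs F :\: facet_vs G &
    exists H, [/\ bier_facet D H, lex_lt (chi H) (chi F)
                & facet_vs F :\ v \subset facet_vs H].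
Proof.
case: F G => [A x] [B y] facetF facetG ltGF.
have [[a /setDP[aA aB] xa] | [b /setDP[bT bS] bx]] :=
  lex_lt_facet_witness facetF facetG ltGF.
- exists (inl a); first by rewrite inE !mem_face_vs aA aB.
  exact: lex_lt_facet_ridge_inl facetF aA xa.
- exists (inr b); first by rewrite inE !mem_face_vs bT bS.
  exact: lex_lt_facet_ridge_inr facetF bS bx.
Qed.
End BierSphere.

Arguments lex_lt_facet_ridge {n D} D_ideal {F G}.

Section LexSortedSeq.
Context {n : nat} {T : eqType} {f : T -> 'I_n -> int} {x0 : T} {s : seq T}.
Hypothesis le_s : forall i j, (i < j < size s)%N ->
  lex_le (f (nth x0 s i)) (f (nth x0 s j)).

Lemma lex_sorted_lt {i j} : uniq s -> {in s &, forall F G, f F =1 f G -> F = G} ->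
  (i < j < size s)%N -> lex_lt (f (nth x0 s i)) (f (nth x0 s j)).
Proof.
move=> uniq_s f_inj /[dup] /le_s[eq_ij | //] /andP[ij js].
have i_s := ltn_trans ij js.
have /eqP := f_inj _ _ (mem_nth x0 i_s) (mem_nth x0 js) eq_ij.
by rewrite nth_uniq // => /eqP ji; rewrite ji ltnn in ij.
Qed.

Lemma lex_sorted_index {H k} : H \in s -> (k < size s)%N ->
  lex_lt (f H) (f (nth x0 s k)) -> (index H s < k)%N.
Proof.
move=> Hs ks ltH; rewrite ltnNge leq_eqVlt; apply/negP => /orP[/eqP kH | kH].
  by move: ltH; rewrite kH nth_index //; apply: lex_lt_irr.
apply: lex_lt_le_asym ltH _; rewrite -(nth_index x0 Hs).
by apply: le_s; rewrite kH index_mem.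
Qed.

End LexSortedSeq.

Lemma shelling_order_ridges (V : finType) (s : seq {set V}) :
  (forall i k, (i < k < size s)%N ->
     exists2 v, v \in nth set0 s k :\: nth set0 s i &
       exists2 j, (j < k)%N & nth set0 s k :\ v \subset nth set0 s j) ->
  shelling_order s.
Proof.
move=> ridge k /andP[_ ks]; set Fk := nth set0 s k.
have sdimD1 v : v \in Fk -> sdim (Fk :\ v) = (sdim Fk - 1)%R.
  by move=> vF; rewrite /sdim (cardsD1 v Fk) vF; lia.
split=> [S | T] /[!inE] /andP[sub_k /existsP[i sub_i]].
- have [|v /setDP[vk vi] [j jk sub_j]] := ridge i k; first by rewrite ltn_ord.
  exists (Fk :\ v).
    by rewrite inE subsetDl; apply/existsP; exists (Ordinal jk).
  split; last exact: sdimD1.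
  by rewrite subsetD1 sub_k; apply: contra vi; apply: (subsetP sub_i).
- have [|v /setDP[vk vi] _] := ridge i k; first by rewrite ltn_ord.
  have : T \subset Fk :\ v.
    by rewrite subsetD1 sub_k; apply: contra vi; apply: (subsetP sub_i).
  move=> /subset_leq_card; rewrite -(sdimD1 v vk) /sdim; lia.
Qed.

Theorem mainTheorem8 (n : nat) (D : {set {set 'I_n}}) :
  (2 <= n)%N -> Bn_proper_ideal D ->
  forall s : seq ({set 'I_n} * 'I_n),
    uniq s ->
    (forall F, (F \in s) = bier_facet D F) ->
    (forall i j : 'I_(size s), (i < j)%N ->
        lex_le (chi (tnth (in_tuple s) i)) (chi (tnth (in_tuple s) j))) ->
    shelling_order (map (@facet_vs n) s).
Proof.
move=> n_gt1 D_ideal s uniq_s mem_s sorted_s.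
pose F0 : {set 'I_n} * 'I_n := (set0, Ordinal (ltnW n_gt1)).
have facet_s k : (k < size s)%N -> bier_facet D (nth F0 s k).
  by move=> ks; rewrite -mem_s mem_nth.
have le_s i j : (i < j < size s)%N -> lex_le (chi (nth F0 s i)) (chi (nth F0 s j)).
  case/andP=> ij js; have i_s := ltn_trans ij js.
  by have := sorted_s (Ordinal i_s) (Ordinal js) ij; rewrite !(tnth_nth F0).
have chi_inj_s : {in s &, forall F G, chi F =1 chi G -> F = G}.
  move=> F G; rewrite !mem_s => /and3P[_ + _] /and3P[_ + _]; exact: chi_inj.
apply: shelling_order_ridges => i k; rewrite size_map => /[dup] /andP[ik ks] iks.
have [v vki [H [facetH ltH subH]]] :=
  lex_lt_facet_ridge D_ideal (facet_s k ks) (facet_s i (ltn_trans ik ks))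
    (lex_sorted_lt le_s uniq_s chi_inj_s iks).
have Hs : H \in s by rewrite mem_s.
exists v; first by rewrite !(nth_map F0) // (ltn_trans ik ks).
exists (index H s); first exact: (lex_sorted_index le_s Hs ks ltH).
by rewrite !(nth_map F0) ?index_mem // nth_index.
Qed.
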